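(* Let $p,q\ge1$ be relatively prime integers, $p=p_1^2+p_2^2+p_3^2+p_4^2$ with integers $p_j\ge 0$, and let $a,b,\gamma$ be integers such that $\Delta=r_1r_4-r_2r_3$ is relatively prime to $q$, where $r_1=-p_1-2\gamma p_3+bp_4$, $r_2=p_2+2ap_4-bp_3$, $r_3=p_3-2\gamma p_1+bp_2$, $r_4=-p_4+2ap_2-bp_1$. Let $\varphi(n,m)=e\big(\tfrac1q(an^2+bnm+\gamma m^2)\big)$. For integers $k,\ell$ set $M=p_2k+p_4\ell$, $N=-p_1k-p_3\ell$, $M'=-p_4k+p_2\ell$, $N'=p_3k-p_1\ell$, and $$S(k,\ell)=\sum_{n,m=0}^{q-1} e\Big(\tfrac{nM'+mN'}{q}\Big)\,\overline{\varphi(n,m)}\,\varphi(n+M,m+N).$$ Then $S(k,\ell)=q^2$ if $q\mid k$ and $q\mid \ell$, and $S(k,\ell)=0$ otherwise.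
   Context: $e(t):=e^{2\pi i t}$. *)

From HB Require Import structures.
From mathcomp Require Import all_boot all_order all_algebra.
From mathcomp Require Import all_classical all_reals all_analysis.
From mathcomp Require Import complex.
Set Implicit Arguments. Unset Strict Implicit. Unset Printing Implicit Defensive.
Import Order.TTheory GRing.Theory Num.Theory.
Local Open Scope ring_scope.
Local Open Scope complex_scope.

Definition e (R : realType) (t : R) : R[i] :=
  (cos (2 * pi * t)) +i* (sin (2 * pi * t)).

Definition phi (R : realType) (q : nat) (a b g : int) (n m : int) : R[i] :=
  e ((a * n ^+ 2 + b * n * m + g * m ^+ 2)%:~R / q%:R).

Definition Ssum (R : realType) (q : nat) (a b g p1 p2 p3 p4 : int) (k l : int) : R[i] :=
  let M := p2 * k + p4 * l in
  let N := - p1 * k - p3 * l in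
  let M' := - p4 * k + p2 * l in
  let N' := p3 * k - p1 * l in
  \sum_(n < q) \sum_(m < q)
     e ((n%:Z * M' + m%:Z * N')%:~R / q%:R)
     * conjc (phi R q a b g n m)
     * phi R q a b g (n%:Z + M) (m%:Z + N).

From HB Require Import structures.
From mathcomp Require Import all_boot all_order all_algebra.
From mathcomp Require Import all_classical all_reals all_analysis.
From mathcomp Require Import complex.
From mathcomp Require Import ring lra.
Import Order.TTheory GRing.Theory Num.Theory.
Local Open Scope ring_scope.
Local Open Scope complex_scope.

(* Shifting phi by (M, N) and multiplying by the conjugate of phi leaves, by the
   polarization identity of the quadratic form, a constant times a character
   of (n, m).  With the twist e((nM' + mN')/q) this character is
   e((n (r4 k + r2 l) + m (r3 k + r1 l))/q), so the double sum factors into two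
   geometric sums over q-th roots of unity.  Both are non-zero exactly when q
   divides r4 k + r2 l and r3 k + r1 l, which, Delta being invertible mod q,
   happens exactly when q divides k and l; the constant is then 1. *)

Lemma sumr_expr_root1 (R : idomainType) (w : R) (n : nat) :
  w ^+ n = 1 -> w != 1 -> \sum_(i < n) w ^+ i = 0.
Proof.
move=> wn1 w_neq1; apply/eqP.
have := subrX1 w n; rewrite wn1 subrr => /esym/eqP.
by rewrite mulf_eq0 subr_eq0 (negbTE w_neq1).
Qed.

Lemma dvdz_lin2 (d u v w z k l : int) : coprimez (u * z - v * w) d ->
  ((d %| u * k + v * l) && (d %| w * k + z * l))%Z = ((d %| k) && (d %| l))%Z.
Proof.
rewrite coprimez_sym => det_d.
apply/idP/idP => /andP[dk dl]; apply/andP; split; last 2 first;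
  try by rewrite rpredD ?dvdz_mull.
- rewrite -(Gauss_dvdzr _ det_d).
  have -> : (u * z - v * w) * k = z * (u * k + v * l) - v * (w * k + z * l) by ring.
  by rewrite rpredB ?dvdz_mull.
- rewrite -(Gauss_dvdzr _ det_d).
  have -> : (u * z - v * w) * l = u * (w * k + z * l) - w * (u * k + v * l) by ring.
  by rewrite rpredB ?dvdz_mull.
Qed.

Definition qform (a b g n m : int) : int := a * n ^+ 2 + b * n * m + g * m ^+ 2.

Lemma qformD (a b g n m M N : int) :
  qform a b g (n + M) (m + N) =
    qform a b g n m + qform a b g M N + n * (2 * a * M + b * N) + m * (b * M + 2 * g * N).
Proof. by rewrite /qform; ring. Qed.

Lemma dvdz_qform (d a b g n m : int) :
  (d %| n)%Z -> (d %| m)%Z -> (d %| qform a b g n m)%Z.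
Proof. by move=> dn dm; rewrite !rpredD ?dvdz_mull ?dvdz_mulr ?rpredX. Qed.

Section Character.
Variable R : realType.
Implicit Types x y : R.

Lemma eD x y : e (x + y) = e x * e y.
Proof. by rewrite /e mulrDr cosD sinD; simpc; congr (_ +i* _); rewrite addrC. Qed.

Lemma conjc_e x : conjc (e x) = e (- x).
Proof. by rewrite /e mulrN cosN sinN. Qed.

Lemma e0 : e (0 : R) = 1.
Proof. by rewrite /e mulr0 cos0 sin0. Qed.

Lemma e_natrM (n : nat) x : e (n%:R * x) = e x ^+ n.
Proof.
elim: n => [|n IHn]; first by rewrite mul0r e0 expr0.
by rewrite -addn1 natrD mulrDl mul1r eD IHn exprD expr1.
Qed.

Lemma e_int (z : int) : e (z%:~R : R) = 1.
Proof.
have e1 : e (1 : R) = 1 by rewrite /e mulr1 mulr_natl cos2pi sin2pi.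
have e_nat (n : nat) : e (n%:R : R) = 1 by rewrite -[n%:R]mulr1 e_natrM e1 expr1n.
by case: z => n; rewrite ?NegzE ?intrN -?conjc_e e_nat ?conjc1.
Qed.

Lemma e_neq1 x : 0 < x < 1 -> e x != 1.
Proof.
case/andP=> x_gt0 x_lt1; apply/eqP; rewrite /e => -[+ _].
set y := pi * x.
have -> : 2 * pi * x = y *+ 2 by rewrite /y -mulr_natr; ring.
rewrite cos_mulr2n => cos2y.
have sin2y : sin y ^+ 2 = 0 by rewrite sin2cos2; lra.
have : 0 < sin y.
  apply: sin_gt0_pi; rewrite mulr_gt0 ?pi_gt0 //=.
  by rewrite -[ltRHS]mulr1 ltr_pM2l ?pi_gt0.
by move/eqP: sin2y; rewrite expf_eq0 /= => /eqP ->; rewrite ltxx.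
Qed.

Variable q : nat.
Hypothesis q_gt0 : (0 < q)%N.

Let q_neq0 : (q%:R : R) != 0. Proof. by rewrite pnatr_eq0 -lt0n. Qed.

Lemma e_div_dvdz (c : int) : (q%:Z %| c)%Z -> e (c%:~R / q%:R : R) = 1.
Proof. by case/dvdzP=> t ->; rewrite intrM mulfK // e_int. Qed.

Lemma e_div_modz (c : int) : e (c%:~R / q%:R : R) = e ((c %% q)%Z%:~R / q%:R).
Proof. by rewrite {1}(divz_eq c q) intrD mulrDl eD e_div_dvdz ?dvdz_mull ?mul1r. Qed.

Lemma e_div_eq1P (c : int) : (e (c%:~R / q%:R : R) == 1) = (q%:Z %| c)%Z.
Proof.
apply/idP/idP => [e_eq1|/e_div_dvdz/eqP//]; apply/dvdz_mod0P/eqP/negPn.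
apply: contraL e_eq1 => r_neq0; rewrite e_div_modz e_neq1 //.
set r := (c %% q)%Z in r_neq0 *.
have r_gt0 : 0 < r by rewrite lt_def r_neq0 modz_ge0 // eqz_nat -lt0n.
have r_ltq : r < q by rewrite ltz_pmod // ltz_nat.
rewrite divr_gt0 ?ltr0n ?ltr0z //= ltr_pdivrMr ?ltr0n // mul1r.
by rewrite -[q%:R]/((q%:Z)%:~R : R) ltr_int.
Qed.

Lemma sum_e_div (c : int) :
  \sum_(n < q) e ((n%:Z * c)%:~R / q%:R : R) = if (q%:Z %| c)%Z then q%:R else 0.
Proof.
set w := e (c%:~R / q%:R : R).
have wE (n : 'I_q) : e ((n%:Z * c)%:~R / q%:R) = w ^+ n.
  by rewrite intrM -mulrA -[(n%:Z)%:~R]/(n%:R : R) e_natrM.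
rewrite (eq_bigr _ (fun n _ => wE n)) -e_div_eq1P -/w.
case: eqP => [->|/eqP w_neq1].
  by rewrite (eq_bigr (fun _ => 1)) ?sumr_const ?card_ord // => i _; rewrite expr1n.
apply: sumr_expr_root1 w_neq1.
by rewrite /w -e_natrM mulrC divfK // e_int.
Qed.

End Character.

Lemma phi_shift_twistE (R : realType) (q : nat) (a b g n m M N M' N' : int) :
  e ((n * M' + m * N')%:~R / q%:R : R) * conjc (phi R q a b g n m)
    * phi R q a b g (n + M) (m + N) =
  e ((qform a b g M N)%:~R / q%:R) *
    (e ((n * (M' + 2 * a * M + b * N))%:~R / q%:R)
     * e ((m * (N' + b * M + 2 * g * N))%:~R / q%:R)).
Proof.
rewrite /phi -/(qform _ _ _ _ _) -/(qform _ _ _ (n + M) _) qformD conjc_e.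
rewrite -!eD -!mulNr -!intrN -!mulrDl -!intrD.
by congr (e (_%:~R / _)); ring.
Qed.

Theorem mainTheorem6 (R : realType) (p : int) (q : nat)
  (p1 p2 p3 p4 a b g : int)
  (hp1 : 1 <= p) (hq1 : (1 <= q)%N) (hpq : coprimez p q%:Z)
  (hp : p = p1 ^+ 2 + p2 ^+ 2 + p3 ^+ 2 + p4 ^+ 2)
  (h1 : 0 <= p1) (h2 : 0 <= p2) (h3 : 0 <= p3) (h4 : 0 <= p4)
  (hDelta : let r1 := - p1 - 2 * g * p3 + b * p4 in
            let r2 := p2 + 2 * a * p4 - b * p3 in
            let r3 := p3 - 2 * g * p1 + b * p2 in
            let r4 := - p4 + 2 * a * p2 - b * p1 in
            coprimez (r1 * r4 - r2 * r3) q%:Z)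
  (k l : int) :
  Ssum R q a b g p1 p2 p3 p4 k l =
    (if (q%:Z %| k)%Z && (q%:Z %| l)%Z then ((q ^ 2)%N)%:R else 0).
Proof.
move: hDelta; rewrite /Ssum /=.
set r1 := - p1 - _ + _; set r2 := p2 + _ - _; set r3 := p3 - _ + _; set r4 := - p4 + _ - _.
rewrite [r1 * r4]mulrC => /dvdz_lin2 key.
under eq_bigr => n _ do under eq_bigr => m _ do rewrite phi_shift_twistE.
under eq_bigr => n _ do rewrite -mulr_sumr.
rewrite -mulr_sumr -big_distrlr /= !sum_e_div //.
have -> : - p4 * k + p2 * l + 2 * a * (p2 * k + p4 * l) + b * (- p1 * k - p3 * l)
          = r4 * k + r2 * l by rewrite /r4 /r2; ring.
have -> : p3 * k - p1 * l + b * (p2 * k + p4 * l) + 2 * g * (- p1 * k - p3 * l)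
          = r3 * k + r1 * l by rewrite /r3 /r1; ring.
rewrite -key.
case: (boolP (_ %| r4 * k + _)%Z) => dA; case: (boolP (_ %| r3 * k + _)%Z) => dB;
  rewrite /= ?(mulr0, mul0r) ?mulr0 //.
have /andP[qk ql] : ((q%:Z %| k) && (q%:Z %| l))%Z by rewrite -key dA dB.
rewrite e_div_dvdz ?dvdz_qform ?rpredD ?rpredB ?dvdz_mull ?rpredN ?dvdz_mull //.
by rewrite mul1r -natrM mulnn.
Qed.
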